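(* For every $n\ge1$, every greedy-from-the-bottom (GFB) tree $T$ with $n$ leaves satisfies $\mathcal{C}(T)=c_n$.
   Context: Bifurcating trees: rooted trees in which every internal node has exactly two children, considered up to isomorphism; $\mathcal{T}_n$ is the set of such trees with $n$ leaves. For a node $w$, $\kappa_T(w)$ is its number of descendant leaves. The Colless index is $\mathcal{C}(T)=\sum_{v}|\kappa_T(v_1)-\kappa_T(v_2)|$, summed over internal nodes $v$ with children $v_1,v_2$; $c_n=\min\{\mathcal{C}(T):T\in\mathcal{T}_n\}$. GFB trees: start with a multiset of $n$ single-node trees; while the multiset has more than one tree, remove a tree $u$ with the minimum number of leaves, then remove a tree $v$ with the minimum number of leaves among the remaining trees, and insert the tree consisting of a new root whose two children are the roots of $u$ and $v$. Any tree that can be the final remaining tree of this procedure is a GFB tree with $n$ leaves. *)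

From mathcomp Require Import all_boot.
From Stdlib Require Permutation.
Set Implicit Arguments. Unset Strict Implicit. Unset Printing Implicit Defensive.

(* Rooted bifurcating trees (plane representatives; every internal node has
   exactly two children).  All notions below are invariant under swapping
   children, so working with representatives is harmless. *)
Inductive tree : Type :=
  | Leaf : tree
  | Node : tree -> tree -> tree.

Fixpoint leaves (t : tree) : nat :=
  match t with
  | Leaf => 1
  | Node l r => leaves l + leaves r
  end.

Definition absdiff (a b : nat) : nat := maxn a b - minn a b.

Fixpoint colless (t : tree) : nat :=
  match t with
  | Leaf => 0
  | Node l r => colless l + colless r + absdiff (leaves l) (leaves r)
  end.

Definition is_cn (n c : nat) : Prop :=
  (exists t, leaves t = n /\ colless t = c) /\
  (forall t, leaves t = n -> c <= colless t).

Definition gfb_step (s s' : list tree) : Prop :=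
  exists u v rest,
    Permutation.Permutation s (u :: v :: rest) /\
    (forall t, List.In t (v :: rest) -> leaves u <= leaves t) /\
    (forall t, List.In t rest -> leaves v <= leaves t) /\
    s' = Node u v :: rest.

Inductive gfb_reach : list tree -> list tree -> Prop :=
  | gfb_refl s : gfb_reach s s
  | gfb_next s s' s'' : gfb_step s s' -> gfb_reach s' s'' -> gfb_reach s s''.

Definition GFB (n : nat) (T : tree) : Prop :=
  gfb_reach (nseq n Leaf) [:: T].

From mathcomp Require Import all_boot zify.
From Stdlib Require Import Permutation.

(* Let cmin n be the Colless index of the maximally balanced tree, built from
   balanced trees with floor(n/2) and ceil(n/2) leaves.  A parity case analysis
   gives cmin (a + b) <= cmin a + cmin b + |a - b|, so cmin n = c_n.

   The GFB procedure only looks at leaf counts, and merging u and v adds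
   |leaves u - leaves v| to the Colless index, so it can be run on the
   summaries (leaves, Colless index).  Comparing two runs merge by merge shows
   that the cost they add depends only on the multiset of initial leaf
   counts.  For n leaves, GFB first merges leaves into cherries; from then on
   every tree is built from a left and a right half of nearly equal sizes, so
   the run is the sum of two GFB runs on floor(n/2) and ceil(n/2) leaves,
   whose costs are cmin (floor(n/2)) and cmin (ceil(n/2)) by induction; the extra
   cost n mod 2 comes from the odd leaf. *)

Fixpoint cmin_fuel (k n : nat) : nat :=
  if k is k'.+1 then
    if n <= 1 then 0 else cmin_fuel k' n./2 + cmin_fuel k' (uphalf n) + odd n
  else 0.

(* Fuel [n] suffices: both halves of [n > 1] are smaller than [n]. *)
Definition cmin (n : nat) : nat := cmin_fuel n n.

Lemma cmin_fuel_enough k1 k2 n : n <= k1 -> n <= k2 -> cmin_fuel k1 n = cmin_fuel k2 n.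
Proof.
elim: k1 k2 n => [|k1 IH] [|k2] n h1 h2 //=; try by have -> : n = 0 by lia.
by case: ifP => // hn; rewrite (IH k2) 1?(IH k2 (uphalf n)); lia.
Qed.

Lemma cmin_fuelE k n : n <= k -> cmin_fuel k n = cmin n.
Proof. by move=> h; apply: cmin_fuel_enough. Qed.

Lemma cminE n : 1 < n -> cmin n = cmin n./2 + cmin (uphalf n) + odd n.
Proof.
case: n => [//|k] hk; rewrite {1}/cmin [cmin_fuel _ _]/= ifF; last lia.
by rewrite !cmin_fuelE //; lia.
Qed.

Lemma cmin1 : cmin 1 = 0. Proof. by []. Qed.

Lemma cmin_double m : cmin m.*2 = (cmin m).*2.
Proof.
case: m => [|m] //; rewrite cminE; last lia.
by rewrite doubleK uphalf_double odd_double; lia.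
Qed.

Lemma cmin_doubleS m : 0 < m -> cmin m.*2.+1 = cmin m + cmin m.+1 + 1.
Proof.
move=> m_gt0; rewrite cminE; last lia.
have -> : (m.*2.+1)./2 = m by lia.
have -> : uphalf m.*2.+1 = m.+1 by lia.
by rewrite /= odd_double.
Qed.

Lemma even_or_odd n : exists m, n = m.*2 \/ n = m.*2.+1.
Proof. by exists n./2; case/boolP: (odd n) => ?; [right|left]; lia. Qed.

Lemma absdiffC a b : absdiff a b = absdiff b a.
Proof. by rewrite /absdiff maxnC minnC. Qed.

Definition cmin_subadd_below (N : nat) : Prop :=
  forall a b c, a + b = c -> c < N -> 0 < a -> 0 < b ->
  cmin c <= cmin a + cmin b + absdiff a b.

Section CminSubadd.

Variable N : nat.
Hypothesis IH : cmin_subadd_below N.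

Lemma cmin_subadd_double x b : 0 < x -> 0 < b -> x.*2 + b = N ->
  cmin N <= cmin x.*2 + cmin b + absdiff x.*2 b.
Proof.
move=> x_gt0 b_gt0 eN; rewrite -eN cmin_double.
have [y [eb | eb]] := even_or_odd b; subst b.
  rewrite -doubleD !cmin_double.
  by have := IH x y (x + y) erefl; rewrite /absdiff; lia.
case: y b_gt0 eN => [|y] _ eN.
  rewrite cmin1 addn1 cmin_doubleS //.
  by have := IH x 1 x.+1; rewrite cmin1 /absdiff; lia.
have -> : x.*2 + y.+1.*2.+1 = (x + y.+1).*2.+1 by lia.
rewrite !cmin_doubleS ?addn_gt0 ?x_gt0 //.
have := IH x y.+1 (x + y.+1) erefl; have := IH x y.+2 (x + y.+1).+1.
by rewrite /absdiff; lia.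
Qed.

Lemma cmin_subadd_odd x y : x.*2.+1 + y.*2.+1 = N ->
  cmin N <= cmin x.*2.+1 + cmin y.*2.+1 + absdiff x.*2.+1 y.*2.+1.
Proof.
move=> eN; rewrite -eN; have -> : x.*2.+1 + y.*2.+1 = (x + y).+1.*2 by lia.
rewrite cmin_double.
case: x eN => [|x] eN; case: y eN => [|y] eN //=; rewrite ?add0n ?addn0 ?cmin1 ?cmin_doubleS //.
- by have := IH y.+1 1 y.+2; rewrite cmin1 /absdiff; lia.
- by have := IH x.+1 1 x.+2; rewrite cmin1 /absdiff; lia.
have := IH x.+2 y.+1 (x.+1 + y.+1).+1; have := IH x.+1 y.+2 (x.+1 + y.+1).+1.
by rewrite /absdiff; lia.
Qed.

Lemma cmin_subadd_step a b : 0 < a -> 0 < b -> a + b = N ->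
  cmin N <= cmin a + cmin b + absdiff a b.
Proof.
move=> a_gt0 b_gt0 ab_N.
have [x [ea | ea]] := even_or_odd a; subst a.
  by apply: cmin_subadd_double => //; lia.
have [y [eb | eb]] := even_or_odd b; subst b.
  by rewrite absdiffC [cmin _ + _]addnC; apply: cmin_subadd_double => //; lia.
exact: cmin_subadd_odd.
Qed.

End CminSubadd.

Lemma cmin_subadd a b : 0 < a -> 0 < b -> cmin (a + b) <= cmin a + cmin b + absdiff a b.
Proof.
suff IH N : cmin_subadd_below N by exact: (IH (a + b).+1).
elim: N => [|N IH] a' b' c ab_c c_lt; first by [].
case: (ltnP c N) => [|c_ge]; first exact: IH.
have -> : c = N by lia.
by move=> a_gt0 b_gt0; apply: (@cmin_subadd_step N IH a' b'); lia.
Qed.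

Lemma leaves_gt0 t : 0 < leaves t.
Proof. by elim: t => //= l IHl r IHr; rewrite addn_gt0 IHl. Qed.

Lemma cmin_le_colless t : cmin (leaves t) <= colless t.
Proof.
elim: t => [|l IHl r IHr] //=.
by have := @cmin_subadd _ _ (leaves_gt0 l) (leaves_gt0 r); lia.
Qed.

Lemma exists_colless_cmin n : 0 < n -> exists t, leaves t = n /\ colless t = cmin n.
Proof.
elim: n {-2}n (leqnn n) => [|N IH] n n_le n_gt0; first lia.
case: (leqP n 1) => [n_le1 | n_gt1].
  by exists Leaf; have -> : n = 1 by lia.
have [l [hl cl]] := IH n./2 ltac:(lia) ltac:(lia).
have [r [hr cr]] := IH (uphalf n) ltac:(lia) ltac:(lia).
exists (Node l r); split => /=; first lia.
by rewrite cl cr hl hr (@cminE n n_gt1) /absdiff; lia.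
Qed.

Lemma is_cn_cmin n : 0 < n -> is_cn n (cmin n).
Proof.
move=> n_gt0; split; first exact: exists_colless_cmin.
by move=> t <-; apply: cmin_le_colless.
Qed.

Set Implicit Arguments.
Unset Strict Implicit.
Unset Printing Implicit Defensive.

Lemma In_nseq (T : Type) n (x : T) : forall t, List.In t (nseq n x) -> t = x.
Proof. by elim: n => //= n IH t [<- | /IH]. Qed.

Lemma sumn_map_Permutation (T : Type) (f : T -> nat) (s t : list T) :
  Permutation s t -> sumn (map f s) = sumn (map f t).
Proof. by elim=> //= *; lia. Qed.

Lemma Permutation_cons_min (a b : nat) s t : Permutation (a :: s) (b :: t) ->
    (forall x, List.In x s -> a <= x) -> (forall x, List.In x t -> b <= x) ->
  a = b /\ Permutation s t.
Proof.
move=> hP ha hb; suff eab : a = b by split=> //; subst b; apply: Permutation_cons_inv hP.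
case: (Permutation_in a hP (List.in_eq a s)) => // /hb ba.
case: (Permutation_in b (Permutation_sym hP) (List.in_eq b t)) => // /ha; lia.
Qed.

Section Greedy.

Variables (A : Type) (w : A -> nat) (c : A -> A -> A).

Definition greedy_step (s s' : list A) : Prop :=
  exists u v rest,
    Permutation s (u :: v :: rest) /\
    (forall t, List.In t (v :: rest) -> w u <= w t) /\
    (forall t, List.In t rest -> w v <= w t) /\
    s' = c u v :: rest.

Inductive greedy_reach : list A -> list A -> Prop :=
  | greedy_refl s : greedy_reach s s
  | greedy_next s s' s'' : greedy_step s s' -> greedy_reach s' s'' -> greedy_reach s s''.

Lemma greedy_reach_trans s1 s2 s3 :
  greedy_reach s1 s2 -> greedy_reach s2 s3 -> greedy_reach s1 s3.
Proof. by elim=> // s s' s'' hs _ IH /IH; apply: greedy_next. Qed.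

Lemma greedy_reach_cases s s' : greedy_reach s s' ->
  s = s' \/ exists2 s'', greedy_step s s'' & greedy_reach s'' s'.
Proof. by case=> [|? s'' ? hs hs'']; [left | right; exists s'']. Qed.

Lemma greedy_reach_step s u v rest s' :
  Permutation s (u :: v :: rest) ->
  (forall t, List.In t (v :: rest) -> w u <= w t) ->
  (forall t, List.In t rest -> w v <= w t) ->
  greedy_reach (c u v :: rest) s' -> greedy_reach s s'.
Proof. by move=> hs hu hv; apply: greedy_next; exists u, v, rest. Qed.

Lemma Permutation_min_head (s : list A) : s <> [::] ->
  exists u rest, Permutation s (u :: rest) /\ forall t, List.In t rest -> w u <= w t.
Proof.
elim: s => [//|x [|y s] IH] _; first by exists x, [::].
have [u [rest [hs hu]]] := IH ltac:(by []).
case: (leqP (w x) (w u)) => [xu | ux].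
  exists x, (y :: s); split => // t /(Permutation_in _ hs) [<- // | /hu]; lia.
exists u, (x :: rest); split.
  exact: Permutation_trans (perm_skip x hs) (perm_swap _ _ _).
by move=> t [<- | /hu]; lia.
Qed.

Lemma greedy_reach_singleton s : s <> [::] -> exists x, greedy_reach s [:: x].
Proof.
move e: (length s) => n; elim: n s e => [|n IH] [|x [|y s]] //= len_s _.
  by exists x; apply: greedy_refl.
have [u [r [hs hu]]] := @Permutation_min_head (x :: y :: s) ltac:(by []).
have r_nil : r <> [::] by move=> r0; have := Permutation_length hs; rewrite r0.
have [v [rest [hr hv]]] := Permutation_min_head r_nil.
have hs' := Permutation_trans hs (perm_skip u hr).
have [z hz] : exists z, greedy_reach (c u v :: rest) [:: z].
  by apply: IH => //; have := Permutation_length hs'; rewrite /=; lia.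
exists z; apply: greedy_reach_step hs' _ hv hz.
by move=> t /(Permutation_in _ (Permutation_sym hr)) /hu.
Qed.

End Greedy.

Lemma greedy_reach_map (A B : Type) (w : A -> nat) (c : A -> A -> A)
    (w' : B -> nat) (c' : B -> B -> B) (phi : A -> B) (I : list A -> Prop) :
  (forall s u v rest, I s -> Permutation s (u :: v :: rest) ->
     (forall t, List.In t (v :: rest) -> w u <= w t) ->
     (forall t, List.In t rest -> w v <= w t) ->
     [/\ I (c u v :: rest),
         forall t, List.In t (v :: rest) -> w' (phi u) <= w' (phi t),
         forall t, List.In t rest -> w' (phi v) <= w' (phi t) &
         phi (c u v) = c' (phi u) (phi v)]) ->
  forall s s', greedy_reach w c s s' -> I s ->
    greedy_reach w' c' (map phi s) (map phi s').
Proof.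
move=> hstep s s'; elim=> [? _ | s0 s1 s2 [u [v [rest [hs [hu [hv ->]]]]]] _ IH hI].
  exact: greedy_refl.
have [hI' hu' hv' hc] := hstep _ _ _ _ hI hs hu hv.
apply: (greedy_reach_step (Permutation_map phi hs)).
- by move=> _ /(List.in_map_iff phi (v :: rest)) [t [<- /hu']].
- by move=> _ /(List.in_map_iff phi rest) [t [<- /hv']].
- by rewrite -hc; apply: IH.
Qed.

Definition graft (p q : nat * nat) : nat * nat :=
  (p.1 + q.1, p.2 + q.2 + absdiff p.1 q.1).

Definition summary (t : tree) : nat * nat := (leaves t, colless t).

Lemma gfb_reach_summary s s' : gfb_reach s s' ->
  greedy_reach fst graft (map summary s) (map summary s').
Proof.
move=> hs; apply: (greedy_reach_map (w := leaves) (c := Node) (I := fun _ => True)) => //.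
by elim: hs => [? | ? ? ? hs _ IH]; [apply: greedy_refl | apply: greedy_next hs IH].
Qed.

Definition cost_sum (s : list (nat * nat)) : nat := sumn (map snd s).

Lemma graft_cost_determined s1 s2 p1 p2 :
    greedy_reach fst graft s1 [:: p1] -> greedy_reach fst graft s2 [:: p2] ->
    Permutation (map fst s1) (map fst s2) ->
  p1.2 + cost_sum s2 = p2.2 + cost_sum s1.
Proof.
move e1: [:: p1] => t1 h1; elim: h1 p1 e1 s2 => [s | s s' t1' step1 h1 IH] p1 e1 s2 h2 hP.
  subst s; case/greedy_reach_cases: h2 => [-> | [s2' [u [v [rest [hs2 _]]]] _]].
    by rewrite /cost_sum /=; lia.
  by have := Permutation_length hP; rewrite !List.length_map (Permutation_length hs2).
case/greedy_reach_cases: h2 => [e2 | [s2' step2 h2]].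
  case: step1 {IH} => [u [v [rest [hs1 _]]]]; subst s2.
  by have := Permutation_length hP; rewrite !List.length_map (Permutation_length hs1).
case: step1 h1 IH => [u1 [v1 [r1 [hs1 [hu1 [hv1 ->]]]]]] _ IH.
case: step2 h2 => [u2 [v2 [r2 [hs2 [hu2 [hv2 ->]]]]]] h2.
have hP' : Permutation (u1.1 :: v1.1 :: map fst r1) (u2.1 :: v2.1 :: map fst r2).
  apply: Permutation_trans (Permutation_map fst (Permutation_sym hs1)) _.
  exact: Permutation_trans hP (Permutation_map fst hs2).
have min_map (a : nat * nat) (l : list (nat * nat)) : (forall t, List.In t l -> a.1 <= t.1) ->
    forall x, List.In x (map fst l) -> a.1 <= x.
  by move=> ha x /List.in_map_iff [t [<- /ha]].
have [eu hPr] := Permutation_cons_min hP' (min_map _ _ hu1) (min_map _ _ hu2).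
have [ev hPrr] := Permutation_cons_min hPr (min_map _ _ hv1) (min_map _ _ hv2).
have := IH p1 e1 _ h2; rewrite /= eu ev => /(_ (perm_skip _ hPrr)).
rewrite /cost_sum (sumn_map_Permutation snd hs1) (sumn_map_Permutation snd hs2) /= eu ev.
lia.
Qed.

Lemma greedy_reach_cherries j k tail : (forall t, List.In t tail -> 0 < t.1) ->
  greedy_reach fst graft (nseq j (2, 0) ++ nseq k.*2 (1, 0) ++ tail)
                         (nseq (j + k) (2, 0) ++ tail).
Proof.
move=> tail_gt0; elim: k j => [|k IH] j; first by rewrite addn0; apply: greedy_refl.
have gt0 t : List.In t (nseq j (2, 0) ++ nseq k.*2 (1, 0) ++ tail)%list -> 0 < t.1.
  move=> ht; case: (List.in_app_or (nseq j (2, 0)) _ t ht) => [hj | {}ht].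
    by rewrite (In_nseq hj).
  case: (List.in_app_or (nseq k.*2 (1, 0)) tail t ht) => [hk | /tail_gt0 //].
  by rewrite (In_nseq hk).
rewrite -addSnnS; apply: (greedy_reach_step (u := (1, 0)) (v := (1, 0)) _ _ _ (IH j.+1)).
- apply: Permutation_trans (Permutation_sym (Permutation_middle _ _ _)) _.
  exact/perm_skip/Permutation_sym/Permutation_middle.
- by move=> t [<- // | /gt0].
- exact: gt0.
Qed.

(* Two GFB runs in lockstep: pairs are merged componentwise and weighted by
   their total leaf count.  Under [pair_inv] the components of every pair have
   leaf counts differing by at most one, the larger one always second, and
   unequal in at most one pair; this keeps the merges compatible with both
   projections and with the componentwise sum. *)
Definition pair_weight (q : (nat * nat) * (nat * nat)) : nat := q.1.1 + q.2.1.

Definition pair_graft (q r : (nat * nat) * (nat * nat)) : (nat * nat) * (nat * nat) :=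
  (graft q.1 r.1, graft q.2 r.2).

Definition pair_sum (q : (nat * nat) * (nat * nat)) : nat * nat :=
  (q.1.1 + q.2.1, q.1.2 + q.2.2).

Definition near_balanced (q : (nat * nat) * (nat * nat)) : Prop :=
  q.1.1 <= q.2.1 <= q.1.1.+1.

Definition excess (s : list ((nat * nat) * (nat * nat))) : nat :=
  sumn (map (fun q => q.2.1 - q.1.1) s).

Definition pair_inv (s : list ((nat * nat) * (nat * nat))) : Prop :=
  (forall q, List.In q s -> near_balanced q) /\ excess s <= 1.

Lemma pair_inv_step s u v rest : pair_inv s -> Permutation s (u :: v :: rest) ->
  [/\ pair_inv (pair_graft u v :: rest), near_balanced u &
      forall t, List.In t (v :: rest) -> near_balanced t].
Proof.
move=> [bal_s exc_s] hs.
have bal t : List.In t (u :: v :: rest) -> near_balanced t.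
  by move=> /(Permutation_in _ (Permutation_sym hs)) /bal_s.
have bal_u := bal u (List.in_eq _ _).
have bal_v := bal v (List.in_cons _ _ _ (List.in_eq _ _)).
split=> //; last by move=> t ht; apply: bal; right.
move: exc_s bal_u bal_v; rewrite /excess (sumn_map_Permutation _ hs) /near_balanced /=.
move=> exc /andP[bu1 bu2] /andP[bv1 bv2]; split; last by rewrite /excess /=; lia.
move=> t [<- | ht]; last by apply: bal; right; right.
by rewrite /near_balanced /=; apply/andP; split; lia.
Qed.

Lemma pair_reach_map (phi : (nat * nat) * (nat * nat) -> nat * nat) :
    (forall u t, near_balanced u -> near_balanced t ->
       pair_weight u <= pair_weight t -> (phi u).1 <= (phi t).1) ->
    (forall u v, near_balanced u -> near_balanced v ->
       pair_weight u <= pair_weight v -> phi (pair_graft u v) = graft (phi u) (phi v)) ->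
  forall s s', greedy_reach pair_weight pair_graft s s' -> pair_inv s ->
    greedy_reach fst graft (map phi s) (map phi s').
Proof.
move=> mono hom s s' hs; apply: (greedy_reach_map (I := pair_inv)) hs.
move=> s0 u v rest inv hs0 hu hv; have [inv' bal_u bal] := pair_inv_step inv hs0.
split=> //.
- by move=> t ht; apply: mono (bal t ht) (hu t ht).
- move=> t ht; have bal_v := bal v (List.in_eq _ _).
  exact: mono bal_v (bal t (List.in_cons _ _ _ ht)) (hv t ht).
- exact: hom (bal v (List.in_eq _ _)) (hu v (List.in_eq _ _)).
Qed.

Lemma pair_reach_split s q : pair_inv s ->
    greedy_reach pair_weight pair_graft s [:: q] ->
  [/\ greedy_reach fst graft (map fst s) [:: q.1],
      greedy_reach fst graft (map snd s) [:: q.2] &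
      greedy_reach fst graft (map pair_sum s) [:: pair_sum q]].
Proof.
move=> inv hs; split.
- apply: (pair_reach_map (phi := fst)) hs inv => // u t /andP[? ?] /andP[? ?].
  by rewrite /pair_weight; lia.
- apply: (pair_reach_map (phi := snd)) hs inv => // u t /andP[? ?] /andP[? ?].
  by rewrite /pair_weight; lia.
- apply: (pair_reach_map (phi := pair_sum)) hs inv => // u v /andP[? ?] /andP[? ?].
  (* |a - b| + |a' - b'| = |(a + a') - (b + b')| when a' - a and b' - b are
     0 or 1 and a + a' <= b + b'. *)
  by rewrite /pair_weight /pair_sum /pair_graft /graft /absdiff /= => ?; congr (_, _); lia.
Qed.

Definition greedy_cost (n c : nat) : Prop :=
  forall p, greedy_reach fst graft (nseq n (1, 0)) [:: p] -> p.2 = c.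

Lemma greedy_cost_witness n p c :
  greedy_reach fst graft (nseq n (1, 0)) [:: p] -> p.2 = c -> greedy_cost n c.
Proof.
by move=> hp <- q hq; have := graft_cost_determined hq hp (Permutation_refl _); lia.
Qed.

Lemma greedy_cost_double x : 0 < x ->
  greedy_cost x (cmin x) -> greedy_cost x.*2 (cmin x.*2).
Proof.
move=> x_gt0 cost_x.
have inv : pair_inv (nseq x ((1, 0), (1, 0))).
  split; first by move=> q hq; rewrite (In_nseq hq).
  by rewrite /excess map_nseq sumn_nseq.
have [q hq] : exists q, greedy_reach pair_weight pair_graft (nseq x ((1, 0), (1, 0))) [:: q].
  by apply: greedy_reach_singleton; case: x x_gt0 {cost_x inv}.
have [h1 h2 h3] := pair_reach_split inv hq; rewrite !map_nseq in h1 h2 h3.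
have cherries := greedy_reach_cherries 0 x (tail := [::]) (fun _ => False_ind _).
rewrite !cats0 in cherries.
apply: greedy_cost_witness (greedy_reach_trans cherries h3) _.
by rewrite /= (cost_x _ h1) (cost_x _ h2) cmin_double addnn.
Qed.

Lemma greedy_cost_doubleS x : 0 < x ->
    greedy_cost x (cmin x) -> greedy_cost x.+1 (cmin x.+1) ->
  greedy_cost x.*2.+1 (cmin x.*2.+1).
Proof.
case: x => // x _ cost_x cost_x1.
set Q := ((1, 0), (2, 0)) :: nseq x ((1, 0), (1, 0)).
have inv : pair_inv Q.
  split; first by move=> q [<- | hq] //; rewrite (In_nseq hq).
  by rewrite /excess /= map_nseq sumn_nseq.
have [q hq] : exists q, greedy_reach pair_weight pair_graft Q [:: q].
  exact: greedy_reach_singleton.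
have [h1 h2 h3] := pair_reach_split inv hq; rewrite /= !map_nseq /= in h1 h2 h3.
have leaf_min t : List.In t (nseq x (1, 0)) -> 1 <= t.1 by move=> ht; rewrite (In_nseq ht).
have cherry_min t : List.In t (nseq x (2, 0)) -> 2 <= t.1 by move=> ht; rewrite (In_nseq ht).
have {}h2 : greedy_reach fst graft (nseq x.+2 (1, 0)) [:: q.2].
  apply: (greedy_reach_step (u := (1, 0)) (v := (1, 0)) (Permutation_refl _)) h2 => //.
  by move=> t [<- | /leaf_min].
(* Merging the odd leaf with a cherry costs 1, which is the only difference
   between this list and [map pair_sum Q]. *)
have [r hr] : exists r, greedy_reach fst graft ((3, 1) :: nseq x (2, 0)) [:: r].
  exact: greedy_reach_singleton.
have run : greedy_reach fst graft (nseq x.+1.*2.+1 (1, 0)) [:: r].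
  rewrite -addn1 nseqD.
  apply: greedy_reach_trans (greedy_reach_cherries 0 x.+1 (tail := [:: (1, 0)]) _) _.
    by move=> t [<- | []].
  apply: (greedy_reach_step (u := (1, 0)) (v := (2, 0))) hr.
  - by rewrite add0n; apply/Permutation_sym/Permutation_cons_append.
  - by move=> t [<- // | /cherry_min /ltnW].
  - by move=> t /cherry_min.
apply: greedy_cost_witness run _.
have := graft_cost_determined hr h3 (Permutation_refl _).
rewrite /cost_sum /= map_nseq sumn_nseq (cost_x _ h1) (cost_x1 _ h2) cmin_doubleS //.
lia.
Qed.

Lemma greedy_cost_cmin n : 0 < n -> greedy_cost n (cmin n).
Proof.
elim: n {-2}n (leqnn n) => [|N IH] n n_le n_gt0; first lia.
have [x [en | en]] := even_or_odd n; subst n.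
  by apply: greedy_cost_double; [lia | apply: IH; lia].
case: x n_le n_gt0 => [|x] n_le _.
  by apply: (@greedy_cost_witness 1 (1, 0)) => //; apply: greedy_refl.
by apply: greedy_cost_doubleS => //; apply: IH; lia.
Qed.

Theorem proposition6 (n : nat) (T : tree) :
  1 <= n -> GFB n T -> is_cn n (colless T).
Proof.
move=> n_gt0 gfb_T.
have := gfb_reach_summary gfb_T; rewrite map_nseq => /(greedy_cost_cmin n_gt0) /= ->.
exact: is_cn_cmin.
Qed.
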